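(* Let $G$ be a claw-free graph (i.e., $G$ contains no induced subgraph isomorphic to $K_{1,3}$). Then $\alpha_{\mathrm{od}}(G)=\alpha(G^2)$ and $\chi_{\mathrm{so}}(G)=\chi(G^2)$.
   Context: All graphs are finite, simple and undirected. For a vertex $v$, $N(v)$ is its open neighborhood. An odd independent set in a graph $G=(V,E)$ is an independent set $S\subseteq V$ such that for every $v\in V\setminus S$, either $N(v)\cap S=\varnothing$ or $|N(v)\cap S|$ is odd. $\alpha_{\mathrm{od}}(G)$ denotes the maximum size of an odd independent set of $G$. A strong odd coloring of $G$ is a proper vertex coloring such that for every vertex $v$, each color used on $N(v)$ appears an odd number of times in $N(v)$; $\chi_{\mathrm{so}}(G)$ is the minimum number of colors in a strong odd coloring. $G^2$ is the square of $G$: same vertex set, two distinct vertices adjacent iff their distance in $G$ is at most $2$. $\alpha$ and $\chi$ denote independence number and chromatic number. *)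

From mathcomp Require Import all_boot.
Set Implicit Arguments. Unset Strict Implicit. Unset Printing Implicit Defensive.

Section Graphs.
Variables (T : finType) (e : rel T).

Definition simple_graph := irreflexive e /\ symmetric e.

Definition nbhd (v : T) : {set T} := [set u | e v u].

Definition claw_free : Prop :=
  ~ exists v x y z : T,
      [/\ e v x, e v y, e v z
        & [/\ x != y, x != z, y != z & [&& ~~ e x y, ~~ e x z & ~~ e y z]]].

Definition sq_rel : rel T :=
  fun x y => (x != y) && (e x y || [exists z, e x z && e z y]).

Definition independent (S : {set T}) : bool :=
  [forall x in S, forall y in S, ~~ e x y].

Definition odd_independent (S : {set T}) : bool :=
  independent S &&
  [forall v in ~: S, (#|nbhd v :&: S| == 0) || odd #|nbhd v :&: S|].

Definition alpha : nat := \max_(S : {set T} | independent S) #|S|.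
Definition alpha_od : nat := \max_(S : {set T} | odd_independent S) #|S|.

Definition proper_col (k : nat) (f : {ffun T -> 'I_k}) : bool :=
  [forall x, forall y, e x y ==> (f x != f y)].

Definition strong_odd_col (k : nat) (f : {ffun T -> 'I_k}) : bool :=
  proper_col f &&
  [forall v, forall c : 'I_k,
    (#|[set u in nbhd v | f u == c]| == 0) || odd #|[set u in nbhd v | f u == c]|].

Definition colorable (k : nat) : bool := [exists f : {ffun T -> 'I_k}, proper_col f].
Definition so_colorable (k : nat) : bool :=
  [exists f : {ffun T -> 'I_k}, strong_odd_col f].

Hypothesis (eirr : irreflexive e).

Lemma so_colorable_card : so_colorable #|T|.
Proof.
apply/existsP; exists [ffun x => enum_rank x]; apply/andP; split.
  apply/forallP => x; apply/forallP => y; apply/implyP => exy.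
  rewrite !ffunE; apply/negP => /eqP /enum_rank_inj Exy.
  by move: exy; rewrite Exy eirr.
apply/forallP => v; apply/forallP => c; apply/orP.
have: #|[set u in nbhd v | [ffun x => enum_rank x] u == c]| <= 1.
  apply/card_le1_eqP => x y; rewrite !inE !ffunE => /andP[_ /eqP hx] /andP[_ /eqP hy].
  by apply: enum_rank_inj; rewrite hx hy.
by case: #|_| => [|[|]] //= _; [left | right].
Qed.

Lemma colorable_card : colorable #|T|.
Proof.
case/existsP: so_colorable_card => f /andP[pf _]; by apply/existsP; exists f.
Qed.

End Graphs.

Definition chi (T : finType) (e : rel T) (he : irreflexive e) : nat :=
  ex_minn (ex_intro (colorable e) #|T| (colorable_card he)).

Definition chi_so (T : finType) (e : rel T) (he : irreflexive e) : nat :=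
  ex_minn (ex_intro (so_colorable e) #|T| (so_colorable_card he)).

Lemma sq_rel_irr (T : finType) (e : rel T) : irreflexive (sq_rel e).
Proof. by move=> x; rewrite /sq_rel eqxx. Qed.

(** In a claw-free graph the pairwise non-adjacent neighbours of a vertex are
    at most two, so if their number is zero or odd it is at most one.  Hence a
    set [S] that is independent in [G] meets every neighbourhood in zero or an
    odd number of vertices exactly when it meets every neighbourhood in at most
    one vertex, i.e. exactly when [S] is independent in [G^2].  Applied to [S]
    itself this identifies odd independent sets of [G] with independent sets of
    [G^2]; applied to the colour classes it identifies strong odd colourings of
    [G] with proper colourings of [G^2]. *)

From mathcomp Require Import all_boot.

Set Implicit Arguments.
Unset Strict Implicit.
Unset Printing Implicit Defensive.

Definition odd_or_empty (n : nat) : bool := (n == 0) || odd n.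

Lemma odd_or_empty_le1 n : n <= 1 -> odd_or_empty n.
Proof. by case: n => [|[]]. Qed.

Lemma odd_or_empty_le2 n : odd_or_empty n -> n <= 2 -> n <= 1.
Proof. by case: n => [|[|[]]]. Qed.

Section Independence.
Variables (T : finType) (e : rel T).

Lemma independentP (S : {set T}) :
  reflect {in S &, forall x y, ~~ e x y} (independent e S).
Proof.
apply: (iffP forall_inP) => [h x y xS | h x xS]; first by move: (h x xS) => /forall_inP; apply.
by apply/forall_inP => y; apply: h.
Qed.

Definition colour_class k (f : {ffun T -> 'I_k}) (c : 'I_k) : {set T} :=
  [set u | f u == c].

Lemma proper_colE k (f : {ffun T -> 'I_k}) :
  proper_col e f = [forall c, independent e (colour_class f c)].
Proof.
apply/forallP/forallP => [h c | h x].
  apply/independentP => x y; rewrite !inE => /eqP fx /eqP fy.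
  by apply/negP => exy; have /forallP/(_ y) := h x; rewrite exy fx fy eqxx.
apply/forallP => y; apply/implyP => exy; apply/negP => /eqP fxy.
by have /independentP/(_ x y) := h (f x); rewrite !inE fxy eqxx exy => /(_ isT isT).
Qed.

Lemma strong_odd_colE k (f : {ffun T -> 'I_k}) :
  strong_odd_col e f =
  [forall c, independent e (colour_class f c) &&
             [forall v, odd_or_empty #|nbhd e v :&: colour_class f c|]].
Proof.
have classE v c : [set u in nbhd e v | f u == c] = nbhd e v :&: colour_class f c.
  by apply/setP => u; rewrite !inE.
rewrite /strong_odd_col proper_colE.
apply/andP/forallP => [[/forallP ind /forallP odd_nbhd] c | h].
  rewrite ind; apply/forallP => v.
  by have /forallP/(_ c) := odd_nbhd v; rewrite classE.
split; first by apply/forallP => c; case/andP: (h c).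
apply/forallP => v; apply/forallP => c.
by case/andP: (h c) => _ /forallP/(_ v); rewrite classE.
Qed.

Lemma odd_independentE (S : {set T}) :
  odd_independent e S =
  independent e S && [forall v, odd_or_empty #|nbhd e v :&: S|].
Proof.
rewrite /odd_independent; case: (boolP (independent e S)) => //= /independentP indS.
apply/forall_inP/forallP => [h v | h v _]; last exact: h.
have [vS | vNS] := boolP (v \in S); last by apply: h; rewrite inE.
suff -> : nbhd e v :&: S = set0 by rewrite cards0.
apply/setP => u; rewrite !inE.
by apply/negP => /andP[evu uS]; move: (indS v u vS uS); rewrite evu.
Qed.

End Independence.

Section ClawFree.
Variables (T : finType) (e : rel T).
Hypotheses (he : irreflexive e) (hs : symmetric e).

Lemma sq_rel_independentE (S : {set T}) :
  independent (sq_rel e) S =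
  independent e S && [forall v, #|nbhd e v :&: S| <= 1].
Proof.
apply/independentP/andP => [ind2 | [/independentP ind /forallP le1] x y xS yS].
  split.
    apply/independentP => x y xS yS; have [-> | xy] := eqVneq x y; first by rewrite he.
    by have := ind2 x y xS yS; rewrite /sq_rel xy negb_or => /andP[].
  apply/forallP => v; apply/card_le1_eqP => x y.
  rewrite !inE => /andP[vx xS] /andP[vy yS]; apply: contraTeq (ind2 x y xS yS) => yx.
  rewrite /sq_rel negbK eq_sym yx; apply/orP; right.
  by apply/existsP; exists v; rewrite (hs x v) vx vy.
rewrite /sq_rel negb_and negb_or ind //=; have [//= | xy] := eqVneq x y.
apply/existsPn => z; apply/negP => /andP[xz zy].
have /card_le1_eqP/(_ x y) := le1 z; rewrite !inE (hs z x) xz zy xS yS.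
by move=> /(_ isT isT) exy; rewrite exy eqxx in xy.
Qed.

Hypothesis cf : claw_free e.

Lemma claw_free_nbhd_independent v (A : {set T}) :
  A \subset nbhd e v -> independent e A -> #|A| <= 2.
Proof.
move=> /subsetP Av /independentP indA; rewrite leqNgt; apply/negP.
case/card_gt2P => x [y [z [[xA yA zA] [xy yz zx]]]]; apply: cf.
have evA u : u \in A -> e v u by move/Av; rewrite inE.
exists v, x, y, z; split; rewrite ?evA //.
by split; rewrite 1?[x == z]eq_sym ?indA.
Qed.

Lemma claw_free_odd_or_emptyE (S : {set T}) v :
  independent e S ->
  odd_or_empty #|nbhd e v :&: S| = (#|nbhd e v :&: S| <= 1).
Proof.
move=> /independentP indS; apply/idP/idP => [/odd_or_empty_le2 | ]; last first.
  exact: odd_or_empty_le1.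
apply; apply: (claw_free_nbhd_independent (v := v)); first exact: subsetIl.
by apply/independentP => x y /setIP[_ xS] /setIP[_ yS]; apply: indS.
Qed.

Lemma claw_free_independent_sq (S : {set T}) :
  independent e S && [forall v, odd_or_empty #|nbhd e v :&: S|] =
  independent (sq_rel e) S.
Proof.
rewrite sq_rel_independentE; case: (boolP (independent e S)) => //= indS.
by apply: eq_forallb => v; apply: claw_free_odd_or_emptyE.
Qed.

Lemma odd_independent_sq (S : {set T}) :
  odd_independent e S = independent (sq_rel e) S.
Proof. by rewrite odd_independentE claw_free_independent_sq. Qed.

Lemma strong_odd_col_sq k (f : {ffun T -> 'I_k}) :
  strong_odd_col e f = proper_col (sq_rel e) f.
Proof.
rewrite strong_odd_colE proper_colE.
by apply: eq_forallb => c; apply: claw_free_independent_sq.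
Qed.

End ClawFree.

Theorem theorem1 (T : finType) (e : rel T) (he : irreflexive e) (hs : symmetric e) :
  claw_free e ->
  alpha_od e = alpha (sq_rel e) /\ chi_so he = chi (sq_rel_irr e).
Proof.
move=> cf; split.
  by apply: eq_bigl => S; apply: odd_independent_sq.
apply: eq_ex_minn => k; apply: eq_existsb => f.
exact: strong_odd_col_sq.
Qed.
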